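(* Let $X$ be a robust $X$-set parameter, let $G$ and $G'$ be graphs, and let $\tilde\varphi:\mathfrak{X}(G)\to\mathfrak{X}(G')$ be a graph isomorphism. Suppose $X(K_1)=0$ or $G$ and $G'$ have no isolated vertices. Then $R'=V(G')\setminus\tilde\varphi(V(G))$ is $X$-irrelevant in $G'$, and $\varphi=\nu_{R'}\circ\tilde\varphi$ is a graph isomorphism $\mathfrak{X}(G)\to\mathfrak{X}(G')$ with $\varphi(V(G))=V(G')$ and $|\varphi(S)|=|S|$ for every $X$-set $S$ of $G$.
   Context: All graphs are finite, simple, undirected, with nonempty vertex set. A super $X$-set parameter $X$ assigns to each graph $G$ a family of subsets of $V(G)$, called the $X$-sets of $G$, such that: every graph isomorphism maps $X$-sets to $X$-sets; every graph has at least one $X$-set; and (Superset) if $S$ is an $X$-set of $G$ and $S\subseteq S'\subseteq V(G)$, then $S'$ is an $X$-set of $G$. $X(G)$ is the minimum cardinality of an $X$-set. A robust $X$-set parameter is a super $X$-set parameter that additionally satisfies: ($(n-1)$-set) if $G$ is connected of order $n\ge2$, every set of $n-1$ vertices is an $X$-set; (Component consistency) if $G_1,\dots,G_k$ are the connected components of $G$, then $S\subseteq V(G)$ is an $X$-set of $G$ iff $S\cap V(G_i)$ is an $X$-set of $G_i$ for all $i$. The $X$-TAR graph $\mathfrak{X}(G)$ has as vertices the $X$-sets of $G$, with $S_1S_2$ an edge iff $|S_1\ominus S_2|=1$. A vertex is $X$-irrelevant if it lies in no minimal (w.r.t. inclusion) $X$-set; a set is $X$-irrelevant if all its vertices are.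 For $R\subseteq V(G')$, $\nu_R(S)=S\ominus R$ (symmetric difference). *)

From mathcomp Require Import all_boot.
Set Implicit Arguments. Unset Strict Implicit. Unset Printing Implicit Defensive.

Definition is_graph (T : finType) (e : rel T) : Prop :=
  [/\ symmetric e, irreflexive e & 0 < #|T|].

(* A set parameter: assigns to each graph (T, e) the family of its X-sets. *)
Definition set_param := forall (T : finType), rel T -> {set T} -> bool.

Definition comp_type (T : finType) (e : rel T) (x : T) : finType :=
  {y : T | connect e x y}.

Definition comp_rel (T : finType) (e : rel T) (x : T) : rel (comp_type e x) :=
  fun u v => e (val u) (val v).

Definition comp_restr (T : finType) (e : rel T) (x : T) (S : {set T})
  : {set comp_type e x} := [set u : comp_type e x | val u \in S].

Definition super_param (X : set_param) : Prop :=
  [/\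
      (forall (T T' : finType) (e : rel T) (e' : rel T') (f : T -> T'),
         is_graph e -> is_graph e' -> bijective f ->
         (forall x y, e' (f x) (f y) = e x y) ->
         forall S, X T e S -> X T' e' (f @: S)),
      (forall (T : finType) (e : rel T), is_graph e -> exists S, X T e S) &
      (forall (T : finType) (e : rel T), is_graph e ->
         forall S S' : {set T}, S \subset S' -> X T e S -> X T e S')].

Definition connected_graph (T : finType) (e : rel T) : Prop :=
  forall x y, connect e x y.

Definition robust_param (X : set_param) : Prop :=
  [/\ super_param X,
      (forall (T : finType) (e : rel T), is_graph e -> connected_graph e ->
         2 <= #|T| -> forall S : {set T}, #|S| = #|T|.-1 -> X T e S) &
      (* component consistency (components indexed by a representative x) *)
      (forall (T : finType) (e : rel T), is_graph e -> forall S : {set T},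
         X T e S <-> (forall x : T, X (comp_type e x) (@comp_rel T e x) (comp_restr e x S)))].

Definition symdiff (T : finType) (A B : {set T}) : {set T} := (A :\: B) :|: (B :\: A).

Definition tar_adj (T : finType) (A B : {set T}) : bool := #|symdiff A B| == 1.

(* phi is a graph isomorphism X-TAR(G) -> X-TAR(G'), where phi is given as a
   function on all subsets whose behaviour on X-sets is what matters. *)
Definition tar_iso (X : set_param) (T T' : finType) (e : rel T) (e' : rel T')
  (phi : {set T} -> {set T'}) : Prop :=
  [/\ (forall S, X T e S -> X T' e' (phi S)),
      (forall S1 S2, X T e S1 -> X T e S2 -> phi S1 = phi S2 -> S1 = S2),
      (forall S', X T' e' S' -> exists2 S, X T e S & phi S = S') &
      (forall S1 S2, X T e S1 -> X T e S2 ->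
         tar_adj (phi S1) (phi S2) = tar_adj S1 S2)].

Definition irrelevant_set (X : set_param) (T : finType) (e : rel T) (R : {set T}) : Prop :=
  forall v, v \in R -> forall M : {set T}, minset (X T e) M -> v \notin M.

Definition no_isolated (T : finType) (e : rel T) : Prop :=
  forall x, exists y, e x y.

(* X(K_1) = 0: the empty set is an X-set of K_1. *)
Definition XK1_zero (X : set_param) : Prop :=
  X unit (fun _ _ => false) set0.

From mathcomp Require Import all_boot.
Set Implicit Arguments. Unset Strict Implicit. Unset Printing Implicit Defensive.

(* Removing one vertex from V(G) is a TAR step, and robustness makes every
   V(G) \ {v} an X-set, so phit sends these sets to neighbours W Δ {g v} of
   W := phit V(G).  This g is injective, and applying the same argument to the
   inverse isomorphism shows that it is a bijection V(G) -> V(G').  Since two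
   distinct neighbours Z Δ {a}, Z Δ {b} of a set P force P = Z or
   P = Z Δ {a, b}, induction on the number of missing vertices yields
   phit S = W Δ g(V(G) \ S) for every X-set S.  Consequently phit S ∩ W is
   again an X-set, so minimal X-sets avoid R' = V(G') \ W, and
   phit S Δ R' = g(S). *)

Section SymmetricDifference.
Variable T : finType.
Implicit Types (A B D P Z : {set T}) (a b u : T).

Lemma in_symdiff A B x : (x \in symdiff A B) = (x \in A) (+) (x \in B).
Proof. by rewrite /symdiff !inE; do 2 case: (_ \in _). Qed.

Lemma symdiffA A B D : symdiff A (symdiff B D) = symdiff (symdiff A B) D.
Proof. by apply/setP=> x; rewrite !in_symdiff addbA. Qed.

Lemma symdiffs0 A : symdiff A set0 = A.
Proof. by apply/setP=> x; rewrite in_symdiff inE addbF. Qed.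

Lemma symdiffK A B : symdiff (symdiff A B) B = A.
Proof. by apply/setP=> x; rewrite !in_symdiff addbK. Qed.

Lemma symdiffKl A B : symdiff A (symdiff A B) = B.
Proof. by apply/setP=> x; rewrite !in_symdiff addKb. Qed.

Lemma symdiff_set1 a b : a != b -> symdiff [set a] [set b] = [set a; b].
Proof.
move=> ab; apply/setP=> x; rewrite in_symdiff !inE.
by case: (x =P a) => [->|_]; rewrite ?(negbTE ab).
Qed.

Lemma symdiff_setD1 A B b :
  b \in B -> symdiff A (B :\ b) = symdiff (symdiff A B) [set b].
Proof.
move=> bB; apply/setP=> x; rewrite !(in_symdiff, inE) -addbA.
by case: (x =P b) => [->|_]; rewrite ?bB ?eqxx //= addbF.
Qed.

Lemma setCU1 u A : ~: (u |: A) = ~: A :\ u.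
Proof. by rewrite setCU setDE setIC. Qed.

Lemma tar_adjP A B : reflect (exists a, B = symdiff A [set a]) (tar_adj A B).
Proof.
apply: (iffP cards1P) => [[a AB]|[a ->]]; exists a; last by rewrite symdiffKl.
by rewrite -AB symdiffKl.
Qed.

Lemma tar_adj_symdiffr A B D : tar_adj (symdiff A D) (symdiff B D) = tar_adj A B.
Proof.
rewrite /tar_adj; suff -> : symdiff (symdiff A D) (symdiff B D) = symdiff A B by [].
by apply/setP=> x; rewrite !in_symdiff addbACA addbb addbF.
Qed.

Lemma tar_adj_setU1 u A : u \notin A -> tar_adj (u |: A) A.
Proof.
move=> uA; apply/tar_adjP; exists u; apply/setP=> x; rewrite in_symdiff !inE.
by case: (x =P u) => [->|_]; rewrite ?(negbTE uA) //= addbF.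
Qed.

Lemma tar_adj_setT_setC1 u : tar_adj [set: T] [set~ u].
Proof. by rewrite -(setUCr [set u]); apply: tar_adj_setU1; rewrite !inE eqxx. Qed.

Lemma card_symdiff_set1 a D :
  #|symdiff [set a] D| = 1 -> D = set0 \/ a \in D /\ #|D| = 2.
Proof.
have [aD|aND] := boolP (a \in D).
  have -> : symdiff [set a] D = D :\ a.
    by apply/setP=> x; rewrite in_symdiff !inE; case: (x =P a) => [->|_]; rewrite ?aD.
  by move=> cardD; right; rewrite (cardsD1 a D) aD cardD.
have -> : symdiff [set a] D = a |: D.
  by apply/setP=> x; rewrite in_symdiff !inE; case: (x =P a) => [->|_]; rewrite ?(negbTE aND).
by rewrite cardsU1 aND => -[/cards0_eq]; left.
Qed.

Lemma tar_adj_square Z P a b : a != b ->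
  tar_adj (symdiff Z [set a]) P -> tar_adj (symdiff Z [set b]) P ->
  P = Z \/ P = symdiff Z [set a; b].
Proof.
move=> ab; set D := symdiff Z P.
have adjE c : tar_adj (symdiff Z [set c]) P = (#|symdiff [set c] D| == 1).
  rewrite /tar_adj; suff -> : symdiff (symdiff Z [set c]) P = symdiff [set c] D by [].
  by apply/setP=> x; rewrite !in_symdiff -addbA addbCA.
rewrite !adjE -[P](symdiffKl Z) -/D => /eqP/card_symdiff_set1 [->|[aD cardD]].
  by left; rewrite symdiffs0.
move=> /eqP/card_symdiff_set1 [D0|[bD _]]; first by move: aD; rewrite D0 inE.
right; congr symdiff; apply/esym/eqP; rewrite eqEcard cardD cards2 ab leqnn andbT.
by rewrite subUset !sub1set aD bD.
Qed.

End SymmetricDifference.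

Lemma imsetD1 (aT rT : finType) (f : aT -> rT) (A : {set aT}) x :
  injective f -> f @: (A :\ x) = f @: A :\ f x.
Proof.
move=> f_inj; apply/setP=> y; rewrite !inE; apply/imsetP/andP.
  by case=> z /setD1P [zx zA] ->; rewrite (inj_eq f_inj) zx imset_f.
by case=> yx /imsetP [z zA yz]; exists z => //; rewrite !inE zA andbT -(inj_eq f_inj) -yz.
Qed.

Lemma symdiff_imsetCU1 (aT rT : finType) (g : aT -> rT) (W : {set rT}) (A : {set aT}) u :
  injective g -> u \notin A ->
  symdiff W (g @: ~: (u |: A)) = symdiff (symdiff W (g @: ~: A)) [set g u].
Proof.
move=> g_inj uA; rewrite setCU1 imsetD1 // symdiff_setD1 //.
by apply: imset_f; rewrite inE.
Qed.

Lemma card_setCU1 (T : finType) u (A : {set T}) : u \notin A -> #|~: (u |: A)| < #|~: A|.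
Proof. by move=> uA; rewrite setCU1; apply/proper_card/properD1; rewrite inE. Qed.

Lemma comp_is_graph (T : finType) (e : rel T) (x : T) :
  is_graph e -> is_graph (@comp_rel _ e x).
Proof.
case=> sym irr _; split.
- by move=> u w; rewrite /comp_rel sym.
- by move=> u; rewrite /comp_rel irr.
- by apply/card_gt0P; exists (exist _ x (connect0 e x)).
Qed.

Lemma comp_connected (T : finType) (e : rel T) (x : T) :
  symmetric e -> connected_graph (@comp_rel _ e x).
Proof.
move=> sym.
have lift p z (xz : connect e x z) : path e z p ->
    forall u, val u = last z p -> connect (@comp_rel _ e x) (exist _ z xz) u.
  elim: p z xz => [|y p IHp] z xz /=.
    by move=> _ u uz; apply/eq_connect0/val_inj.
  case/andP=> zy yp u uy.
  apply: connect_trans (IHp y (connect_trans xz (connect1 zy)) yp u uy).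
  exact: connect1.
have from_x u : connect (@comp_rel _ e x) (exist _ x (connect0 e x)) u.
  by case/connectP: (valP u) => p xp ul; apply: lift xp u ul.
move=> u w; apply: connect_trans (from_x w).
by rewrite (sym_connect_sym (fun a b => sym (val a) (val b))) from_x.
Qed.

Lemma Xset_setT (X : set_param) (T : finType) (e : rel T) :
  super_param X -> is_graph e -> X T e [set: T].
Proof. by case=> _ exX upX ge; have [S XS] := exX _ _ ge; apply: upX ge S _ (subsetT S) XS. Qed.

Lemma Xset_set0_card1 (X : set_param) (T : finType) (e : rel T) :
  super_param X -> XK1_zero X -> is_graph e -> #|T| = 1 -> X T e set0.
Proof.
case=> isoX _ _ XK1 ge /eqP/card1P [t Tt].
have all_t u : u = t by apply/eqP; move: (Tt u); rewrite !inE.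
rewrite -(imset0 (fun _ : unit => t)); apply: (isoX _ _ (fun _ _ => false)) => //.
- by split=> //; rewrite card_unit.
- by exists (fun _ => tt) => [[]|u] //; rewrite [u]all_t.
- by case: ge => _ irr _ [] []; rewrite irr.
Qed.

Lemma Xset_setC1_connected (X : set_param) (T : finType) (e : rel T) :
  robust_param X -> is_graph e -> connected_graph e -> XK1_zero X \/ 1 < #|T| ->
  forall v, X T e [set~ v].
Proof.
case=> supX n1X _ ge conn hyp v.
have [T_le1|T_gt1] := leqP #|T| 1; last by apply: n1X; rewrite ?cardsC1.
have T1 : #|T| = 1 by apply/eqP; rewrite eqn_leq T_le1; case: ge.
have -> : [set~ v] = set0 by apply/cards0_eq; rewrite cardsC1 T1.
by case: hyp => [XK1|]; [apply: Xset_set0_card1 | rewrite T1].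
Qed.

Lemma Xset_setC1 (X : set_param) (T : finType) (e : rel T) :
  robust_param X -> is_graph e -> XK1_zero X \/ no_isolated e ->
  forall v, X T e [set~ v].
Proof.
move=> robX ge hyp v; have [supX _ ccX] := robX; have [sym irr _] := ge.
apply/(ccX _ _ ge) => x; have gx := comp_is_graph x ge.
have [xv|xNv] := boolP (connect e x v); last first.
  suff -> : comp_restr e x [set~ v] = setT by exact: Xset_setT.
  apply/setP=> u; rewrite /comp_restr !inE; apply: contraNneq xNv => <-.
  exact: valP u.
set cv : comp_type e x := exist _ v xv.
have -> : comp_restr e x [set~ v] = [set~ cv].
  by apply/setP=> u; rewrite /comp_restr !inE -val_eqE.
apply: Xset_setC1_connected => //; first exact: comp_connected.
case: hyp => [|noiso]; [by left | right].
have [y vy] := noiso v.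
apply/card_gt1P; exists cv, (exist _ y (connect_trans xv (connect1 vy))); split=> //.
by rewrite -val_eqE /=; apply: contraTneq vy => <-; rewrite irr.
Qed.

Lemma tar_iso_sym (X : set_param) (T T' : finType) (e : rel T) (e' : rel T')
    (phit : {set T} -> {set T'}) :
  tar_iso X e e' phit -> exists psi, tar_iso X e' e psi.
Proof.
case=> mapF injF ontoF adjF.
pose psi S' := odflt setT [pick S | X T e S & phit S == S'].
have psiK S' : X T' e' S' -> X T e (psi S') /\ phit (psi S') = S'.
  move=> XS'; rewrite /psi; case: pickP => [S /andP [XS /eqP] //|none].
  by have [S XS phiS] := ontoF _ XS'; move: (none S); rewrite XS phiS eqxx.
exists psi; split.
- by move=> S' /psiK [].
- by move=> S1 S2 /psiK [_ E1] /psiK [_ E2] E; rewrite -E1 -E2 E.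
- move=> S XS; have [XpS phipS] := psiK _ (mapF _ XS).
  by exists (phit S); [exact: mapF | exact: injF].
- by move=> S1 S2 /psiK [X1 E1] /psiK [X2 E2]; rewrite -adjF // E1 E2.
Qed.

(* Surjectivity follows by counting, since phit is a bijection between the X-sets. *)
Lemma tar_iso_symdiffr (X : set_param) (T T' : finType) (e : rel T) (e' : rel T')
    (phit : {set T} -> {set T'}) (R : {set T'}) :
  tar_iso X e e' phit -> (forall S, X T e S -> X T' e' (symdiff (phit S) R)) ->
  tar_iso X e e' (fun S => symdiff (phit S) R).
Proof.
case=> mapF injF ontoF adjF mapR.
have injR S1 S2 : X T e S1 -> X T e S2 ->
    symdiff (phit S1) R = symdiff (phit S2) R -> S1 = S2.
  by move=> X1 X2 /(congr1 (fun A => symdiff A R)); rewrite !symdiffK; apply: injF.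
split=> //; last by move=> S1 S2 X1 X2; rewrite tar_adj_symdiffr adjF.
move=> S' XS'.
set FS := [set S | X T e S]; set FS' := [set S | X T' e' S].
have leFS : #|FS'| <= #|FS|.
  apply: leq_trans (leq_imset_card phit FS); apply/subset_leq_card/subsetP => A.
  by rewrite inE => /ontoF [S XS <-]; apply: imset_f; rewrite inE.
have /eqP imFS : (fun S => symdiff (phit S) R) @: FS == FS'.
  rewrite eqEcard card_in_imset ?leFS ?andbT; last by move=> A B; rewrite !inE; apply: injR.
  by apply/subsetP=> A /imsetP [S]; rewrite !inE => XS ->; apply: mapR.
have : S' \in FS' by rewrite inE.
by rewrite -imFS => /imsetP [S]; rewrite inE => XS ->; exists S.
Qed.

Lemma irrelevant_setC (X : set_param) (T : finType) (e : rel T) (W : {set T}) :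
  (forall S, X T e S -> X T e (S :&: W)) -> irrelevant_set X e (~: W).
Proof.
move=> XI v; rewrite inE => vNW M /minsetP [XM minM].
by rewrite -(minM _ (XI _ XM) (subsetIl M W)) inE (negbTE vNW) andbF.
Qed.

Section TarIsoVertexMap.
Variables (X : set_param) (T T' : finType) (e : rel T) (e' : rel T').
Arguments X : clear implicits.
Variable phit : {set T} -> {set T'}.
Hypotheses (supX : super_param X) (ge : is_graph e) (isoX : tar_iso X e e' phit).
Hypothesis XsetC1 : forall v, X T e [set~ v].

Lemma tar_iso_setC1 : exists2 g : T -> T', injective g &
  forall v, phit [set~ v] = symdiff (phit setT) [set g v].
Proof.
have [_ injF _ adjF] := isoX.
have adj v : exists a, phit [set~ v] == symdiff (phit setT) [set a].
  have /tar_adjP [a ->] : tar_adj (phit setT) (phit [set~ v]).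
    by rewrite adjF ?Xset_setT //; apply: tar_adj_setT_setC1.
  by exists a.
exists (fun v => xchoose (adj v)) => [v w gvw|v]; last exact/eqP/(xchooseP (adj v)).
apply/set1_inj/setC_inj/injF => //.
by rewrite (eqP (xchooseP (adj v))) (eqP (xchooseP (adj w))) gvw.
Qed.

Variable g : T -> T'.
Hypotheses (g_inj : injective g)
  (phit_setC1 : forall v, phit [set~ v] = symdiff (phit setT) [set g v]).

Lemma phit_symdiff_imsetC S : X T e S -> phit S = symdiff (phit setT) (g @: ~: S).
Proof.
have [_ injF _ adjF] := isoX; have [_ _ upX] := supX.
set F := fun S => symdiff (phit setT) (g @: ~: S).
have [n] := ubnP #|~: S|; elim: n S => // n IHn S; rewrite ltnS => leSn XS.
have IH u (A : {set T}) : u \notin A -> #|~: A| <= n -> X T e A ->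
    phit (u |: A) = symdiff (F A) [set g u].
  move=> uA leAn XA; rewrite -symdiff_imsetCU1 //.
  by apply: IHn; [exact: leq_trans (card_setCU1 uA) leAn | apply: upX ge _ _ (subsetUr _ _) XA].
have [/card_gt1P [v [w [vS wS vw]]]|le1] := ltnP 1 #|~: S|.
  rewrite !inE in vS wS.
  have XvS : X T e (v |: S) by apply: upX ge _ _ (subsetUr _ _) XS.
  have wvS : w \notin v |: S by rewrite !inE negb_or eq_sym vw.
  have adjv : tar_adj (symdiff (F S) [set g v]) (phit S).
    by rewrite -IH // adjF ?tar_adj_setU1.
  have adjw : tar_adj (symdiff (F S) [set g w]) (phit S).
    by rewrite -IH // adjF ?tar_adj_setU1 //; apply: upX ge _ _ (subsetUr _ _) XS.
  have gvw : g v != g w by rewrite (inj_eq g_inj).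
  have [//|phitS] := tar_adj_square gvw adjv adjw.
  have : S = w |: (v |: S).
    apply: injF => //; first by apply: upX ge _ _ (subsetUr _ _) XvS.
    have le_vS : #|~: (v |: S)| <= n := ltnW (leq_trans (card_setCU1 vS) leSn).
    by rewrite phitS IH // /F symdiff_imsetCU1 // -symdiff_set1 // symdiffA.
  by move/setP/(_ v); rewrite !inE eqxx orbT (negbTE vS).
move: le1; rewrite leq_eqVlt ltnS leqn0 => /orP [/cards1P [v Sv]|/eqP/cards0_eq S0].
  have -> : S = [set~ v] by rewrite -Sv setCK.
  by rewrite phit_setC1 setCK imset_set1.
have -> : S = setT by rewrite -[S]setCK S0 setC0.
by rewrite setCT imset0 symdiffs0.
Qed.

Variable ginv : T' -> T.
Hypotheses (gK : cancel g ginv) (ginvK : cancel ginv g).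

Lemma symdiff_phit_setC S : X T e S -> symdiff (phit S) (~: phit setT) = g @: S.
Proof.
move=> XS; rewrite phit_symdiff_imsetC // !(can2_imset_pre _ gK ginvK).
by apply/setP=> y; rewrite !(in_symdiff, inE); case: (y \in _); case: (ginv y \in S).
Qed.

Lemma Xset_phit_setI S : X T e S -> X T' e' (phit S :&: phit setT).
Proof.
move=> XS; have [mapF _ _ _] := isoX; have [_ _ upX] := supX.
set S2 := S :|: g @^-1: ~: phit setT.
have XS2 : X T e S2 by apply: upX ge _ _ (subsetUl _ _) XS.
suff -> : phit S :&: phit setT = phit S2 by exact: mapF.
rewrite (phit_symdiff_imsetC XS) (phit_symdiff_imsetC XS2) !(can2_imset_pre _ gK ginvK).
apply/setP=> y; rewrite !(in_symdiff, inE) ginvK.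
by case: (y \in _); case: (ginv y \in S).
Qed.

End TarIsoVertexMap.

Theorem theorem2p24 (X : set_param) (T T' : finType) (e : rel T) (e' : rel T')
  (phit : {set T} -> {set T'}) :
  robust_param X -> is_graph e -> is_graph e' ->
  tar_iso X e e' phit ->
  (XK1_zero X \/ (no_isolated e /\ no_isolated e')) ->
  let R' := ~: phit [set: T] in
  irrelevant_set X e' R' /\
  (let phi := fun S => symdiff (phit S) R' in
   [/\ tar_iso X e e' phi,
       phi [set: T] = [set: T'] &
       forall S, X T e S -> #|phi S| = #|S|]).
Proof.
move=> robX ge ge' isoX hyp R'.
have [supX _ _] := robX; have [_ _ upX] := supX.
have XsetC1 : forall v, X T e [set~ v].
  by apply: Xset_setC1 => //; case: hyp => [|[]]; [left | right].
have XsetC1' : forall v, X T' e' [set~ v].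
  by apply: Xset_setC1 => //; case: hyp => [|[]]; [left | right].
have [g g_inj phit_setC1] := tar_iso_setC1 supX ge isoX XsetC1.
have [psi isoX'] := tar_iso_sym isoX.
have [h h_inj _] := tar_iso_setC1 supX ge' isoX' XsetC1'.
have [ginv gK ginvK] := inj_card_bij g_inj (leq_card _ h_inj).
have XI := Xset_phit_setI supX ge isoX g_inj phit_setC1 gK ginvK.
have phiE := symdiff_phit_setC supX ge isoX g_inj phit_setC1 gK ginvK.
split.
  have [_ _ ontoF _] := isoX.
  by apply: irrelevant_setC => S' /ontoF [S XS <-]; apply: XI.
move=> phi; split.
- apply: tar_iso_symdiffr => // S XS; apply: upX ge' _ _ _ (XI S XS).
  by apply/subsetP=> y; rewrite !(inE, in_symdiff) => /andP [-> ->].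
- by apply/setP=> y; rewrite /phi /R' !(in_symdiff, inE); case: (y \in _).
- by move=> S XS; rewrite /phi /R' phiE // card_imset.
Qed.
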